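(* Let $f$ be a spherically symmetric solution of (RVM) (equivalently of the reduced system below) with total mass $M$, and let $m(t,r)$ be the enclosed mass, so that $0 \leq m(t,r) \leq M$. Let $r, \ell > 0$ and $w < 0$ be given, let $(\mathcal{R}(t), \mathcal{W}(t), \mathcal{L}(t))$ solve $$\dot{\mathcal{R}} = \frac{\mathcal{W}}{\sqrt{1+\mathcal{W}^2 + \mathcal{L}\mathcal{R}^{-2}}},\quad \dot{\mathcal{W}} = \frac{\mathcal{L}}{\mathcal{R}^3\sqrt{1+\mathcal{W}^2+\mathcal{L}\mathcal{R}^{-2}}} + \frac{m(t,\mathcal{R})}{\mathcal{R}^2},\quad \dot{\mathcal{L}} = 0$$ for all $t \geq 0$ with $\mathcal{R}(0)=r$, $\mathcal{W}(0)=w$, $\mathcal{L}(0)=\ell$ (so $\mathcal{L}(t) = \ell$), and define $$D = \ell + M r \sqrt{1 + w^2 + \ell r^{-2}}.$$ Then: 1. There exists a unique $T_0 > 0$ such that $\mathcal{W}(t) < 0$ for $t \in [0,T_0)$, $\mathcal{W}(T_0) = 0$, and $\mathcal{W}(t) > 0$ for $t \in (T_0,\infty)$. 2. $T_0$ satisfies $$r\left(1 - \sqrt{\frac{D}{r^2w^2 + D}}\right) \leq T_0 \leq \frac{-w r^3\sqrt{1+w^2+\ell r^{-2}}}{\ell}.$$ 3. With $\mathcal{R}_- = r\sqrt{\frac{\ell}{r^2w^2+\ell}}$ and $\mathcal{R}_+ = r\sqrt{\frac{D}{r^2w^2+D}}$, we have $\mathcal{R}_- \leq \mathcal{R}(T_0)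 \leq \mathcal{R}_+$. 4. For all $t \in [0,T_0]$, $\mathcal{W}(t)^2 + \ell\mathcal{R}(t)^{-2} \leq w^2 + \ell r^{-2}$. 5. For all $t \in [0,T_0]$, $$\mathcal{R}(t)^2 \leq \left(r - \frac{|w|}{\sqrt{1+w^2+\ell r^{-2}}}\,t\right)^2 + \frac{D}{r^2(1+w^2+\ell r^{-2})}\,t^2.$$
   Context: The relativistic Vlasov–Maxwell system (RVM) is $\partial_t f + \hat p\cdot\nabla_x f + (E+\hat p\wedge B)\cdot\nabla_p f = 0$, $\partial_t E = \nabla\wedge B - 4\pi j$, $\nabla\cdot E = 4\pi\rho$, $\partial_t B = -\nabla\wedge E$, $\nabla\cdot B = 0$, with $\hat p = p/\sqrt{1+|p|^2}$, $\rho = \int f\,dp$, $j = \int \hat p f\,dp$, and $f \ge 0$. For spherically symmetric solutions (invariant under simultaneous rotation of $x$ and $p$), use the variables $r = |x|$, $w = x\cdot p / r$ (radial momentum), $\ell = |x\times p|^2$ (squared angular momentum), writing $f = f(t,r,w,\ell)$. Then $B = 0$, $\rho(t,r) = \frac{\pi}{r^2}\int_0^\infty\int_{-\infty}^\infty f(t,r,w,\ell)\,dw\,d\ell$, the enclosed mass is $m(t,r) = 4\pi\int_0^r s^2\rho(t,s)\,ds$, $E(t,x) = \frac{m(t,r)}{r^2}\frac{x}{r}$, and $f$ satisfies $$\partial_t f + \frac{w}{\sqrt{1+w^2+\ell r^{-2}}}\partial_r f + \left(\frac{\ell}{r^3\sqrt{1+w^2+\ell r^{-2}}} + \frac{m(t,r)}{r^2}\right)\partial_w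 f = 0.$$ The total mass is $M = \iint_{\mathbb{R}^6} f(0,x,p)\,dp\,dx$, which is conserved, and $0 \le m(t,r) \le M$. *)

From Stdlib Require Import Reals.
From Coquelicot Require Import Coquelicot.
Open Scope R_scope.

Definition gam (Rv Wv L : R) : R := sqrt (1 + Wv ^ 2 + L / Rv ^ 2).

(* (Rf, Wf) is a solution on [0, oo) of the characteristic system with
   constant angular momentum L(t) = l, initial data (r, w), and field m:
     R' = W / gam,   W' = l / (R^3 gam) + m(t,R)/R^2.
   Derivatives are two-sided for t > 0; at t = 0 we only require right
   continuity and the initial values (the solution lives on [0, oo)). *)
Definition char_solution (m : R -> R -> R) (r w l : R) (Rf Wf : R -> R) : Prop :=
  Rf 0 = r /\ Wf 0 = w /\
  (forall t, 0 <= t -> 0 < Rf t) /\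
  filterlim Rf (at_right 0) (locally (Rf 0)) /\
  filterlim Wf (at_right 0) (locally (Wf 0)) /\
  (forall t, 0 < t -> is_derive Rf t (Wf t / gam (Rf t) (Wf t) l)) /\
  (forall t, 0 < t ->
     is_derive Wf t (l / (Rf t ^ 3 * gam (Rf t) (Wf t) l) + m t (Rf t) / Rf t ^ 2)).

Definition sign_change_time (Wf : R -> R) (T0 : R) : Prop :=
  0 < T0 /\
  (forall t, 0 <= t < T0 -> Wf t < 0) /\
  Wf T0 = 0 /\
  (forall t, T0 < t -> 0 < Wf t).

From Stdlib Require Import Reals Lra Psatz.
From Coquelicot Require Import Coquelicot.
Open Scope R_scope.

(* For t > 0 we have W' > 0, so W increases strictly and vanishes exactly once,
   at the turning time T0; on [0, T0] we have W <= 0, so R decreases from r.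
   Two quantities control the motion there.  |p|^2 = W^2 + l/R^2 has derivative
   2 W m / R^2 <= 0, which gives item 4, hence gamma <= g0 and W' >= l/(r^3 g0):
   this bounds T0 from above.  W^2 + D/R^2 has derivative
   2 W (l + m R gamma - D) / (R^3 gamma) >= 0; at T0, where W = 0, it bounds
   R(T0) from above, while |p|^2 bounds it from below.  As |R'| < 1,
   T0 >= r - R(T0).  Finally sqrt ((w^2 + D/r^2) R^2 - D) <= |W| R makes that
   square root decrease at rate at least (w^2 + D/r^2)/g0, which squares to
   item 5. *)

Lemma mvt_closed (g dg : R -> R) (a b : R) : a < b ->
  (forall x, a <= x <= b -> is_derive g x (dg x)) ->
  exists c, a <= c <= b /\ g b - g a = dg c * (b - a).
Proof.
  intros Hab Hd. destruct (MVT_gen g a b dg) as [c [Hc Heq]].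
  - rewrite Rmin_left, Rmax_right by lra. intros x Hx. apply Hd; lra.
  - rewrite Rmin_left, Rmax_right by lra. intros x Hx.
    apply continuity_pt_filterlim, (@ex_derive_continuous R_AbsRing R_NormedModule).
    exists (dg x). apply Hd; lra.
  - rewrite Rmin_left, Rmax_right in Hc by lra. now exists c.
Qed.

Lemma is_derive_nonneg_le (g dg : R -> R) (a b : R) : a <= b ->
  (forall x, a <= x <= b -> is_derive g x (dg x)) ->
  (forall x, a <= x <= b -> 0 <= dg x) -> g a <= g b.
Proof.
  intros Hab Hd Hp. destruct (Req_dec a b) as [<-|Hne]; [lra|].
  destruct (mvt_closed g dg a b) as [c [Hc Heq]]; [lra|exact Hd|].
  pose proof (Hp c Hc). nra.
Qed.

Lemma is_derive_pos_lt (g dg : R -> R) (a b : R) : a < b ->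
  (forall x, a <= x <= b -> is_derive g x (dg x)) ->
  (forall x, a <= x <= b -> 0 < dg x) -> g a < g b.
Proof.
  intros Hab Hd Hp. destruct (mvt_closed g dg a b) as [c [Hc Heq]]; [lra|exact Hd|].
  pose proof (Hp c Hc). nra.
Qed.

Definition cont_right0 (f : R -> R) : Prop := filterlim f (at_right 0) (locally (f 0)).

Lemma cont_right0_id : cont_right0 (fun x => x).
Proof. intros P [eps HP]. exists eps. intros y Hy _. apply HP, Hy. Qed.

Lemma cont_right0_comp (h f : R -> R) :
  cont_right0 f -> ex_derive h (f 0) -> cont_right0 (fun x => h (f x)).
Proof.
  intros Hf Hh. eapply filterlim_comp; [exact Hf|].
  exact (@ex_derive_continuous R_AbsRing R_NormedModule h (f 0) Hh).
Qed.

Lemma cont_right0_plus (f g : R -> R) :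
  cont_right0 f -> cont_right0 g -> cont_right0 (fun x => f x + g x).
Proof.
  intros Hf Hg. eapply filterlim_comp_2; [exact Hf|exact Hg|].
  apply (@filterlim_plus R_AbsRing R_NormedModule).
Qed.

Lemma cont_right0_open (f : R -> R) (U : R -> Prop) (d : R) : 0 < d ->
  cont_right0 f -> open U -> U (f 0) -> exists y, 0 < y < d /\ U (f y).
Proof.
  intros Hd Hf HU Hf0.
  assert (Hev : at_right 0 (fun y => (0 < y /\ y < d) /\ U (f y))).
  { apply filter_and; [apply filter_and|].
    - exists (mkposreal 1 Rlt_0_1). intros y _ Hy. exact Hy.
    - destruct (open_lt d 0 Hd) as [e He]. exists e. intros y Hy _. exact (He y Hy).
    - exact (Hf U (HU _ Hf0)). }
  destruct (Hierarchy.filter_ex _ Hev) as [y [Hy HUy]]. now exists y.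
Qed.

Lemma nondecreasing_cont_right0 (g dg : R -> R) (b : R) : cont_right0 g ->
  (forall x, 0 < x <= b -> is_derive g x (dg x)) ->
  (forall x, 0 < x <= b -> 0 <= dg x) ->
  forall s t, 0 <= s <= t -> t <= b -> g s <= g t.
Proof.
  intros Hc Hd Hp s t Hst Htb.
  assert (Hpos : forall s', 0 < s' <= t -> g s' <= g t).
  { intros s' Hs'. apply (is_derive_nonneg_le g dg); [lra| |];
      intros x Hx; [apply Hd|apply Hp]; lra. }
  destruct (Req_dec s t) as [->|Hne]; [lra|].
  destruct (Req_dec s 0) as [->|Hs0]; [|apply Hpos; lra].
  apply Rnot_lt_le. intro Hlt.
  destruct (cont_right0_open g (fun z => g t < z) t) as [y [Hy Hgy]];
    [lra|exact Hc|apply open_gt|exact Hlt|].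
  pose proof (Hpos y ltac:(lra)). lra.
Qed.

Lemma nonincreasing_cont_right0 (g dg : R -> R) (b : R) : cont_right0 g ->
  (forall x, 0 < x <= b -> is_derive g x (dg x)) ->
  (forall x, 0 < x <= b -> dg x <= 0) ->
  forall s t, 0 <= s <= t -> t <= b -> g t <= g s.
Proof.
  intros Hc Hd Hn s t Hst Htb. apply Ropp_le_cancel.
  apply (nondecreasing_cont_right0 (fun x => - g x) (fun x => - dg x) b);
    [|intros x Hx|intros x Hx|lra|lra].
  - apply (cont_right0_comp (fun y => - y)); [exact Hc|auto_derive; auto].
  - apply (is_derive_opp g), Hd, Hx.
  - pose proof (Hn x Hx). lra.
Qed.

Lemma mul_sqrt_le_of_inv_sq (x r w c : R) : 0 < x -> 0 < r -> 0 < c ->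
  c / x ^ 2 <= w ^ 2 + c / r ^ 2 -> r * sqrt (c / (r ^ 2 * w ^ 2 + c)) <= x.
Proof.
  intros Hx Hr Hc H. pose proof (pow2_gt_0 x ltac:(lra)). pose proof (pow2_gt_0 r ltac:(lra)).
  assert (HA : 0 < r ^ 2 * w ^ 2 + c) by (pose proof (pow2_ge_0 w); nra).
  apply (Rmult_le_compat_r (x ^ 2 * r ^ 2)) in H; [|nra].
  replace (c / x ^ 2 * (x ^ 2 * r ^ 2)) with (c * r ^ 2) in H by (field; lra).
  replace ((w ^ 2 + c / r ^ 2) * (x ^ 2 * r ^ 2)) with ((r ^ 2 * w ^ 2 + c) * x ^ 2) in H
    by (field; lra).
  rewrite <- (sqrt_pow2 r) at 1 by lra. rewrite <- (sqrt_pow2 x), <- sqrt_mult_alt by lra.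
  apply sqrt_le_1_alt, (Rmult_le_reg_r (r ^ 2 * w ^ 2 + c)); [exact HA|].
  replace (r ^ 2 * (c / (r ^ 2 * w ^ 2 + c)) * (r ^ 2 * w ^ 2 + c)) with (c * r ^ 2)
    by (field; lra).
  lra.
Qed.

Lemma le_mul_sqrt_of_inv_sq (x r w c : R) : 0 < x -> 0 < r -> 0 < c ->
  w ^ 2 + c / r ^ 2 <= c / x ^ 2 -> x <= r * sqrt (c / (r ^ 2 * w ^ 2 + c)).
Proof.
  intros Hx Hr Hc H. pose proof (pow2_gt_0 x ltac:(lra)). pose proof (pow2_gt_0 r ltac:(lra)).
  assert (HA : 0 < r ^ 2 * w ^ 2 + c) by (pose proof (pow2_ge_0 w); nra).
  apply (Rmult_le_compat_r (x ^ 2 * r ^ 2)) in H; [|nra].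
  replace (c / x ^ 2 * (x ^ 2 * r ^ 2)) with (c * r ^ 2) in H by (field; lra).
  replace ((w ^ 2 + c / r ^ 2) * (x ^ 2 * r ^ 2)) with ((r ^ 2 * w ^ 2 + c) * x ^ 2) in H
    by (field; lra).
  rewrite <- (sqrt_pow2 r) at 1 by lra. rewrite <- (sqrt_pow2 x), <- sqrt_mult_alt by lra.
  apply sqrt_le_1_alt, (Rmult_le_reg_r (r ^ 2 * w ^ 2 + c)); [exact HA|].
  replace (r ^ 2 * (c / (r ^ 2 * w ^ 2 + c)) * (r ^ 2 * w ^ 2 + c)) with (c * r ^ 2)
    by (field; lra).
  lra.
Qed.

Lemma is_derive_opp_sqrt_quad (K c y : R) : 0 < K * y ^ 2 - c ->
  is_derive (fun z => - sqrt (K * z ^ 2 - c)) y (- (K * y) / sqrt (K * y ^ 2 - c)).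
Proof.
  intros Hy. pose proof (sqrt_lt_R0 _ Hy). auto_derive; [nra|].
  replace (K * (y * (y * 1)) + - c) with (K * y ^ 2 - c) by ring. field. lra.
Qed.

Lemma gam_gt_abs (Rv Wv l : R) : 0 < Rv -> 0 <= l -> Rabs Wv < gam Rv Wv l.
Proof.
  intros HR Hl. unfold gam.
  assert (0 <= l / Rv ^ 2) by (apply Rdiv_le_0_compat; [lra|apply pow2_gt_0; lra]).
  rewrite <- sqrt_Rsqr_abs. apply sqrt_lt_1_alt. unfold Rsqr. split; nra.
Qed.

Lemma gam_sq (Rv Wv l : R) : 0 < Rv -> 0 <= l -> gam Rv Wv l ^ 2 = 1 + Wv ^ 2 + l / Rv ^ 2.
Proof.
  intros HR Hl. unfold gam. apply pow2_sqrt.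
  assert (0 <= l / Rv ^ 2) by (apply Rdiv_le_0_compat; [lra|apply pow2_gt_0; lra]).
  nra.
Qed.

Section Characteristic.

Variables (M : R) (m : R -> R -> R) (r w l : R) (Rf Wf : R -> R).
Hypothesis m_bounds : forall t s, 0 <= t -> 0 < s -> 0 <= m t s <= M.
Hypothesis r_pos : 0 < r.
Hypothesis l_pos : 0 < l.
Hypothesis w_neg : w < 0.
Hypothesis sol : char_solution m r w l Rf Wf.

Let Rf0 : Rf 0 = r.
Proof. now destruct sol. Qed.
Let Wf0 : Wf 0 = w.
Proof. now destruct sol as (_ & H & _). Qed.
Let Rf_pos : forall t, 0 <= t -> 0 < Rf t.
Proof. now destruct sol as (_ & _ & H & _). Qed.
Let Rf_cont : cont_right0 Rf.
Proof. now destruct sol as (_ & _ & _ & H & _). Qed.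
Let Wf_cont : cont_right0 Wf.
Proof. now destruct sol as (_ & _ & _ & _ & H & _). Qed.

Let G t := gam (Rf t) (Wf t) l.
Let g0 := gam r w l.
Let D := l + M * r * g0.

Let Rf_derive : forall t, 0 < t -> is_derive Rf t (Wf t / G t).
Proof. now destruct sol as (_ & _ & _ & _ & _ & H & _). Qed.
Let Wf_derive : forall t, 0 < t ->
  is_derive Wf t (l / (Rf t ^ 3 * G t) + m t (Rf t) / Rf t ^ 2).
Proof. now destruct sol as (_ & _ & _ & _ & _ & _ & H). Qed.

Let G_pos : forall t, 0 <= t -> 0 < G t.
Proof.
  intros t Ht. eapply Rle_lt_trans; [apply Rabs_pos|]. apply gam_gt_abs; [apply Rf_pos, Ht|lra].
Qed.
Let g0_pos : 0 < g0.
Proof. eapply Rle_lt_trans; [apply Rabs_pos|]. apply gam_gt_abs; lra. Qed.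
Let D_pos : 0 < D.
Proof.
  destruct (m_bounds 0 r); [lra|lra|].
  pose proof (Rmult_le_pos (M * r) g0 ltac:(nra) ltac:(lra)). unfold D. lra.
Qed.

Lemma Wf_deriv_pos t : 0 < t -> 0 < l / (Rf t ^ 3 * G t) + m t (Rf t) / Rf t ^ 2.
Proof.
  intros Ht. pose proof (Rf_pos t ltac:(lra)). pose proof (G_pos t ltac:(lra)).
  destruct (m_bounds t (Rf t)); [lra|lra|].
  assert (0 < l / (Rf t ^ 3 * G t))
    by (apply Rdiv_lt_0_compat; [lra|apply Rmult_lt_0_compat; [apply pow_lt|]; lra]).
  assert (0 <= m t (Rf t) / Rf t ^ 2) by (apply Rdiv_le_0_compat; [lra|apply pow2_gt_0; lra]).
  lra.
Qed.

Lemma Wf_strict_incr a b : 0 <= a < b -> Wf a < Wf b.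
Proof.
  intros Hab. set (dW t := l / (Rf t ^ 3 * G t) + m t (Rf t) / Rf t ^ 2).
  apply Rle_lt_trans with (Wf ((a + b) / 2)).
  - apply (nondecreasing_cont_right0 Wf dW b); [exact Wf_cont| | |lra|lra];
      intros x Hx; [apply Wf_derive|apply Rlt_le, Wf_deriv_pos]; lra.
  - apply (is_derive_pos_lt Wf dW); [lra| |];
      intros x Hx; [apply Wf_derive|apply Wf_deriv_pos]; lra.
Qed.

Lemma r_le_Rf_add t : 0 <= t -> r <= Rf t + t.
Proof.
  intros Ht. rewrite <- Rf0. replace (Rf 0) with (Rf 0 + 0) by ring.
  apply (nondecreasing_cont_right0 (fun x => Rf x + x) (fun x => Wf x / G x + 1) t);
    [|intros x Hx|intros x Hx|lra|lra].
  - apply cont_right0_plus; [exact Rf_cont|exact cont_right0_id].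
  - apply (is_derive_plus Rf (fun x => x)); [apply Rf_derive; lra|apply (@is_derive_id R_AbsRing)].
  - pose proof (gam_gt_abs (Rf x) (Wf x) l (Rf_pos x ltac:(lra)) ltac:(lra)) as Habs.
    fold (G x) in Habs. apply Rabs_def2 in Habs.
    replace (Wf x / G x + 1) with ((Wf x + G x) / G x) by (field; lra).
    apply Rdiv_le_0_compat; lra.
Qed.

(* c = l gives |p|^2 along the characteristic; c = D is the comparison
   quantity, increasing while W <= 0 because D >= l + m R gamma there. *)
Let momentum_sq c t := Wf t ^ 2 + c / Rf t ^ 2.

Let momentum_sq_derive c t : 0 < t ->
  is_derive (momentum_sq c) t (2 * Wf t / Rf t ^ 2 * (m t (Rf t) + (l - c) / (Rf t * G t))).
Proof.
  intros Ht. pose proof (Rf_pos t ltac:(lra)). pose proof (G_pos t ltac:(lra)).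
  assert (Hinv : is_derive (fun y => c / y ^ 2) (Rf t) (-2 * c / Rf t ^ 3))
    by (auto_derive; [nra|field; lra]).
  replace (2 * Wf t / Rf t ^ 2 * (m t (Rf t) + (l - c) / (Rf t * G t)))
    with (INR 2 * (l / (Rf t ^ 3 * G t) + m t (Rf t) / Rf t ^ 2) * Wf t ^ pred 2
          + Wf t / G t * (-2 * c / Rf t ^ 3)) by (simpl; field; lra).
  apply (is_derive_plus (fun x => Wf x ^ 2) (fun x => c / Rf x ^ 2)).
  - apply is_derive_pow, Wf_derive, Ht.
  - apply (is_derive_comp (fun y => c / y ^ 2) Rf); [exact Hinv|apply Rf_derive, Ht].
Qed.

Let momentum_sq_cont c : cont_right0 (momentum_sq c).
Proof.
  apply cont_right0_plus.
  - apply (cont_right0_comp (fun y => y ^ 2)); [exact Wf_cont|auto_derive; auto].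
  - apply (cont_right0_comp (fun y => c / y ^ 2)); [exact Rf_cont|].
    auto_derive. rewrite Rf0. nra.
Qed.

Section BeforeTurning.

Variable T : R.
Hypothesis Wf_T_nonpos : Wf T <= 0.

Lemma Wf_nonpos t : 0 <= t <= T -> Wf t <= 0.
Proof.
  intros Ht. destruct (Req_dec t T) as [->|Hne]; [exact Wf_T_nonpos|].
  pose proof (Wf_strict_incr t T ltac:(lra)). lra.
Qed.

Lemma Rf_nonincreasing s t : 0 <= s <= t -> t <= T -> Rf t <= Rf s.
Proof.
  apply (nonincreasing_cont_right0 Rf (fun x => Wf x / G x) T Rf_cont);
    intros x Hx; [apply Rf_derive; lra|].
  pose proof (Wf_nonpos x ltac:(lra)). pose proof (G_pos x ltac:(lra)).
  assert (0 <= - Wf x / G x) by (apply Rdiv_le_0_compat; lra). lra.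
Qed.

Lemma Rf_le_r t : 0 <= t <= T -> Rf t <= r.
Proof. intros Ht. rewrite <- Rf0. apply Rf_nonincreasing; lra. Qed.

Lemma momentum_sq_l_le t : 0 <= t <= T -> Wf t ^ 2 + l / Rf t ^ 2 <= w ^ 2 + l / r ^ 2.
Proof.
  intros Ht. rewrite <- Rf0, <- Wf0.
  apply (nonincreasing_cont_right0 (momentum_sq l)
    (fun x => 2 * Wf x / Rf x ^ 2 * (m x (Rf x) + (l - l) / (Rf x * G x))) T
    (momentum_sq_cont l));
    [intros x Hx; apply momentum_sq_derive; lra|intros x Hx|lra|lra].
  pose proof (Wf_nonpos x ltac:(lra)). pose proof (Rf_pos x ltac:(lra)).
  destruct (m_bounds x (Rf x)); [lra|lra|].
  assert (0 <= - Wf x / Rf x ^ 2) by (apply Rdiv_le_0_compat; [lra|apply pow2_gt_0; lra]).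
  rewrite Rminus_diag, Rdiv_0_l, Rplus_0_r. nra.
Qed.

Let G_le_g0 t : 0 <= t <= T -> G t <= g0.
Proof. intros Ht. apply sqrt_le_1_alt. pose proof (momentum_sq_l_le t Ht). lra. Qed.

Lemma Wf_ge_linear t : 0 <= t <= T -> w + l / (r ^ 3 * g0) * t <= Wf t.
Proof.
  intros Ht. set (c := l / (r ^ 3 * g0)).
  assert (H : Wf 0 - c * 0 <= Wf t - c * t).
  { apply (nondecreasing_cont_right0 (fun x => Wf x - c * x)
      (fun x => l / (Rf x ^ 3 * G x) + m x (Rf x) / Rf x ^ 2 - c * 1) T);
      [|intros x Hx|intros x Hx|lra|lra].
    - apply (cont_right0_plus Wf (fun x => - (c * x))); [exact Wf_cont|].
      apply (cont_right0_comp (fun y => - (c * y))); [exact cont_right0_id|auto_derive; auto].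
    - apply (is_derive_minus Wf (fun x => c * x)); [apply Wf_derive; lra|].
      apply (is_derive_scal (fun x => x)), (@is_derive_id R_AbsRing).
    - pose proof (Rf_pos x ltac:(lra)). pose proof (G_pos x ltac:(lra)).
      pose proof (Rf_le_r x ltac:(lra)). pose proof (G_le_g0 x ltac:(lra)).
      destruct (m_bounds x (Rf x)); [lra|lra|].
      assert (0 <= m x (Rf x) / Rf x ^ 2) by (apply Rdiv_le_0_compat; [lra|apply pow2_gt_0; lra]).
      assert (Hc : c <= l / (Rf x ^ 3 * G x)).
      { apply Rmult_le_compat_l; [lra|]. apply Rinv_le_contravar.
        - apply Rmult_lt_0_compat; [apply pow_lt|]; lra.
        - apply Rmult_le_compat; [apply pow_le; lra|lra|apply pow_incr; lra|lra]. }
      lra. }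
  rewrite Wf0 in H. lra.
Qed.

Lemma time_le_bound : 0 <= T -> T <= - w * r ^ 3 * g0 / l.
Proof.
  intros HT. pose proof (Wf_ge_linear T ltac:(lra)).
  assert (Hc : 0 < l / (r ^ 3 * g0))
    by (apply Rdiv_lt_0_compat; [lra|apply Rmult_lt_0_compat; [apply pow_lt|]; lra]).
  apply (Rmult_le_reg_l (l / (r ^ 3 * g0))); [exact Hc|].
  replace (l / (r ^ 3 * g0) * (- w * r ^ 3 * g0 / l)) with (- w) by (field; lra). lra.
Qed.

Lemma momentum_sq_D_ge t : 0 <= t <= T -> w ^ 2 + D / r ^ 2 <= Wf t ^ 2 + D / Rf t ^ 2.
Proof.
  intros Ht. rewrite <- Rf0, <- Wf0.
  apply (nondecreasing_cont_right0 (momentum_sq D)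
    (fun x => 2 * Wf x / Rf x ^ 2 * (m x (Rf x) + (l - D) / (Rf x * G x))) T (momentum_sq_cont D));
    [intros x Hx; apply momentum_sq_derive; lra|intros x Hx|lra|lra].
  pose proof (Wf_nonpos x ltac:(lra)). pose proof (Rf_pos x ltac:(lra)).
  pose proof (G_pos x ltac:(lra)). pose proof (Rf_le_r x ltac:(lra)).
  pose proof (G_le_g0 x ltac:(lra)).
  destruct (m_bounds x (Rf x)); [lra|lra|].
  assert (0 <= - Wf x / Rf x ^ 2) by (apply Rdiv_le_0_compat; [lra|apply pow2_gt_0; lra]).
  assert (m x (Rf x) * Rf x * G x <= M * r * g0).
  { apply Rmult_le_compat; [nra|lra|apply Rmult_le_compat; lra|lra]. }
  assert (0 <= - (m x (Rf x) + (l - D) / (Rf x * G x))).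
  { replace (- (m x (Rf x) + (l - D) / (Rf x * G x)))
      with ((D - l - m x (Rf x) * Rf x * G x) / (Rf x * G x)) by (field; lra).
    apply Rdiv_le_0_compat; [unfold D; lra|nra]. }
  nra.
Qed.

Let K0 := w ^ 2 + D / r ^ 2.

Let K0_pos : 0 < K0.
Proof.
  assert (0 < D / r ^ 2) by (apply Rdiv_lt_0_compat; [lra|apply pow2_gt_0; lra]).
  pose proof (pow2_ge_0 w). unfold K0. lra.
Qed.

Lemma sqrt_K0_le_momentum t : 0 <= t <= T -> sqrt (K0 * Rf t ^ 2 - D) <= - Wf t * Rf t.
Proof.
  intros Ht. pose proof (Wf_nonpos t Ht). pose proof (Rf_pos t ltac:(lra)).
  pose proof (momentum_sq_D_ge t Ht) as HK.
  apply (Rmult_le_compat_r (Rf t ^ 2)) in HK; [|apply pow2_ge_0].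
  replace ((Wf t ^ 2 + D / Rf t ^ 2) * Rf t ^ 2) with ((- Wf t * Rf t) ^ 2 + D) in HK
    by (field; lra).
  rewrite <- (sqrt_pow2 (- Wf t * Rf t)) by nra. apply sqrt_le_1_alt.
  unfold K0. lra.
Qed.

Lemma sqrt_K0_le_linear t : 0 <= t <= T -> D < K0 * Rf t ^ 2 ->
  sqrt (K0 * Rf t ^ 2 - D) <= - (r * w) - K0 / g0 * t.
Proof.
  intros Ht HDt.
  assert (Hpos : forall x, 0 <= x <= t -> 0 < K0 * Rf x ^ 2 - D).
  { intros x Hx. pose proof (Rf_nonincreasing x t ltac:(lra) ltac:(lra)).
    pose proof (Rf_pos t ltac:(lra)). assert (Rf t ^ 2 <= Rf x ^ 2) by (apply pow_incr; lra).
    nra. }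
  set (S y := sqrt (K0 * y ^ 2 - D)).
  assert (H : - S (Rf 0) - K0 / g0 * 0 <= - S (Rf t) - K0 / g0 * t).
  { apply (nondecreasing_cont_right0 (fun x => - S (Rf x) - K0 / g0 * x)
      (fun x => Wf x / G x * (- (K0 * Rf x) / S (Rf x)) - K0 / g0 * 1) t);
      [|intros x Hx|intros x Hx|lra|lra].
    - apply (cont_right0_plus (fun x => - S (Rf x)) (fun x => - (K0 / g0 * x))).
      + apply (cont_right0_comp (fun y => - S y)); [exact Rf_cont|].
        eexists. apply is_derive_opp_sqrt_quad, (Hpos 0); lra.
      + apply (cont_right0_comp (fun y => - (K0 / g0 * y)));
          [exact cont_right0_id|auto_derive; auto].
    - apply (is_derive_minus (fun x => - S (Rf x)) (fun x => K0 / g0 * x)).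
      + apply (is_derive_comp (fun y => - S y) Rf);
          [apply is_derive_opp_sqrt_quad, Hpos; lra|apply Rf_derive; lra].
      + apply (is_derive_scal (fun x => x)), (@is_derive_id R_AbsRing).
    - pose proof (G_pos x ltac:(lra)). pose proof (G_le_g0 x ltac:(lra)).
      pose proof (sqrt_K0_le_momentum x ltac:(lra)).
      assert (HSx : 0 < S (Rf x)) by (apply sqrt_lt_R0, Hpos; lra).
      replace (Wf x / G x * (- (K0 * Rf x) / S (Rf x)) - K0 / g0 * 1)
        with (K0 * ((- Wf x * Rf x) * g0 - G x * S (Rf x)) / (G x * S (Rf x) * g0)) by (field; lra).
      apply Rdiv_le_0_compat; [|apply Rmult_lt_0_compat; [apply Rmult_lt_0_compat|]; lra].
      apply Rmult_le_pos; [lra|]. unfold S in *. nra. }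
  assert (HS0 : S (Rf 0) = - (r * w)).
  { unfold S. rewrite Rf0.
    replace (K0 * r ^ 2 - D) with ((- (r * w)) ^ 2) by (unfold K0; field; lra).
    apply sqrt_pow2. nra. }
  rewrite HS0 in H. unfold S in H. lra.
Qed.

Lemma Rf_sq_le t : 0 <= t <= T ->
  Rf t ^ 2 <= (r - Rabs w / g0 * t) ^ 2 + D / (r ^ 2 * (1 + w ^ 2 + l / r ^ 2)) * t ^ 2.
Proof.
  intros Ht. rewrite Rabs_left, <- (gam_sq r w l) by lra. change (gam r w l) with g0.
  set (P := (r - - w / g0 * t) ^ 2 + D / (r ^ 2 * g0 ^ 2) * t ^ 2).
  assert (HP : K0 * P - D = (r * w + K0 * t / g0) ^ 2) by (unfold P, K0; field; lra).
  pose proof (pow2_ge_0 (r * w + K0 * t / g0)).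
  destruct (Rle_lt_dec (K0 * Rf t ^ 2) D) as [Hle|Hlt]; [nra|].
  pose proof (sqrt_K0_le_linear t Ht Hlt) as Hcmp.
  pose proof (sqrt_pos (K0 * Rf t ^ 2 - D)).
  assert (Hsq : sqrt (K0 * Rf t ^ 2 - D) ^ 2 <= (- (r * w) - K0 / g0 * t) ^ 2)
    by (apply pow_incr; lra).
  rewrite pow2_sqrt in Hsq by lra.
  replace ((- (r * w) - K0 / g0 * t) ^ 2) with ((r * w + K0 * t / g0) ^ 2) in Hsq by (field; lra).
  nra.
Qed.

End BeforeTurning.

Lemma Rf_turning_ge T : 0 <= T -> Wf T = 0 -> r * sqrt (l / (r ^ 2 * w ^ 2 + l)) <= Rf T.
Proof.
  intros HT HW. pose proof (momentum_sq_l_le T (Req_le _ _ HW) T ltac:(lra)) as H.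
  rewrite HW in H. apply mul_sqrt_le_of_inv_sq; [apply Rf_pos, HT|lra|lra|lra].
Qed.

Lemma Rf_turning_le T : 0 <= T -> Wf T = 0 -> Rf T <= r * sqrt (D / (r ^ 2 * w ^ 2 + D)).
Proof.
  intros HT HW. pose proof (momentum_sq_D_ge T (Req_le _ _ HW) T ltac:(lra)) as H.
  rewrite HW in H. apply le_mul_sqrt_of_inv_sq; [apply Rf_pos, HT|lra|lra|lra].
Qed.

Lemma turning_time_ge T : 0 <= T -> Wf T = 0 -> r * (1 - sqrt (D / (r ^ 2 * w ^ 2 + D))) <= T.
Proof.
  intros HT HW. pose proof (r_le_Rf_add T HT). pose proof (Rf_turning_le T HT HW). lra.
Qed.

Lemma exists_Wf_zero : exists T0, 0 < T0 /\ Wf T0 = 0.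
Proof.
  set (Tb := - w * r ^ 3 * g0 / l).
  assert (HTb : 0 < Tb).
  { apply Rdiv_lt_0_compat; [|lra].
    apply Rmult_lt_0_compat; [apply Rmult_lt_0_compat; [lra|apply pow_lt]|]; lra. }
  assert (HWTb : 0 <= Wf Tb).
  { destruct (Rle_lt_dec (Wf Tb) 0) as [Hle|Hlt]; [|lra].
    pose proof (Wf_ge_linear Tb Hle Tb ltac:(lra)) as Hlin.
    replace (l / (r ^ 3 * g0) * Tb) with (- w) in Hlin by (unfold Tb; field; lra). lra. }
  pose proof (Wf_strict_incr Tb (Tb + 1) ltac:(lra)).
  destruct (cont_right0_open Wf (fun z => z < 0) 1) as [e [He HWe]];
    [lra|exact Wf_cont|apply open_lt|rewrite Wf0; exact w_neg|].
  destruct (Ranalysis5.IVT_interv Wf e (Tb + 1)) as [T0 [HT0 HWT0]]; [|lra|exact HWe|lra|].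
  - intros a Ha. apply continuity_pt_filterlim, (@ex_derive_continuous R_AbsRing R_NormedModule).
    exists (l / (Rf a ^ 3 * G a) + m a (Rf a) / Rf a ^ 2). apply Wf_derive; lra.
  - exists T0. split; [lra|exact HWT0].
Qed.

Lemma sign_change_time_of_zero T0 : 0 < T0 -> Wf T0 = 0 -> sign_change_time Wf T0.
Proof.
  intros HT0 HW. repeat split; [exact HT0| |exact HW|].
  - intros t Ht. rewrite <- HW. apply Wf_strict_incr; lra.
  - intros t Ht. rewrite <- HW. apply Wf_strict_incr; lra.
Qed.

End Characteristic.

Lemma sign_change_time_unique (f : R -> R) (T0 T1 : R) :
  sign_change_time f T0 -> sign_change_time f T1 -> T1 = T0.
Proof.
  intros (H0 & Hneg0 & Hz0 & Hposf0) (H1 & Hneg1 & Hz1 & Hposf1).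
  destruct (Rtotal_order T1 T0) as [Hlt|[Heq|Hgt]]; [|exact Heq|].
  - pose proof (Hneg0 T1 ltac:(lra)). lra.
  - pose proof (Hposf0 T1 Hgt). lra.
Qed.

Theorem lemma1 (M : R) (m : R -> R -> R) (r w l : R) (Rf Wf : R -> R) :
  (forall t s, 0 <= t -> 0 < s -> 0 <= m t s <= M) ->
  0 < r -> 0 < l -> w < 0 ->
  char_solution m r w l Rf Wf ->
  let g0 := sqrt (1 + w ^ 2 + l / r ^ 2) in
  let D := l + M * r * g0 in
  exists T0,
    sign_change_time Wf T0 /\
    (forall T1, sign_change_time Wf T1 -> T1 = T0) /\
    (r * (1 - sqrt (D / (r ^ 2 * w ^ 2 + D))) <= T0 /\
     T0 <= - w * r ^ 3 * g0 / l) /\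
    (r * sqrt (l / (r ^ 2 * w ^ 2 + l)) <= Rf T0 /\
     Rf T0 <= r * sqrt (D / (r ^ 2 * w ^ 2 + D))) /\
    (forall t, 0 <= t <= T0 -> Wf t ^ 2 + l / Rf t ^ 2 <= w ^ 2 + l / r ^ 2) /\
    (forall t, 0 <= t <= T0 ->
       Rf t ^ 2 <= (r - Rabs w / g0 * t) ^ 2 + D / (r ^ 2 * (1 + w ^ 2 + l / r ^ 2)) * t ^ 2).
Proof.
  intros Hm Hr Hl Hw Hsol g0 D.
  destruct (exists_Wf_zero M m r w l Rf Wf Hm Hr Hl Hw Hsol) as [T0 [HT0 HWT0]].
  assert (HT0le : Wf T0 <= 0) by lra.
  assert (HT0ge : 0 <= T0) by lra.
  assert (Hsc : sign_change_time Wf T0)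
    by (apply (sign_change_time_of_zero M m r w l Rf Wf); assumption).
  exists T0. split; [|split; [|split; [split|split; [split|split]]]].
  - exact Hsc.
  - intros T1 HT1. exact (sign_change_time_unique Wf T0 T1 Hsc HT1).
  - apply (turning_time_ge M m r w l Rf Wf); assumption.
  - apply (time_le_bound M m r w l Rf Wf); assumption.
  - apply (Rf_turning_ge M m r w l Rf Wf); assumption.
  - apply (Rf_turning_le M m r w l Rf Wf); assumption.
  - intros t Ht. apply (momentum_sq_l_le M m r w l Rf Wf) with T0; assumption.
  - intros t Ht. apply (Rf_sq_le M m r w l Rf Wf) with T0; assumption.
Qed.
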